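(* Let $u\in\mathcal M$ and $w=P_Wu$, and set $\mathcal M_w=\mathcal M\cap V_w$. For $k=1,\dots,K$ define the ellipsoids $$\mathcal E_k=\{v\in V_w:\operatorname{dist}(v,V_k)\le\varepsilon_k\}.$$ Let $S=\{k:\ \mathcal S(u_k^*(w),\mathcal M_k)\le R\mu_k\varepsilon_k\}$ and $\mathcal M_w^*=\bigcup_{k\in S}\mathcal E_k$. Then $\mathcal M_w\subset\mathcal M_w^*$. If moreover the family is $\sigma$-admissible for some $\sigma>0$, then $$\sup_{v\in\mathcal M_w^*}\ \inf_{u'\in\mathcal M_w}\|v-u'\|\le\delta_{(\kappa+1)\sigma},\qquad \kappa=R/r.$$
   Context: Let $V$ be a real Hilbert space with norm $\|\cdot\|$. Let $Y\subset\mathbb R^d$ be compact and let $y\mapsto u(y)$ be a continuous map from $Y$ to $V$. Set $\mathcal M=\{u(y):y\in Y\}$, which is compact. Let $W\subset V$ be a linear subspace of finite dimension $m$, let $P_W$ be the orthogonal projection onto $W$, and let $W^\perp$ be its orthogonal complement. For $w\in W$ put $V_w=w+W^\perp$. For $\sigma\ge 0$ define - $\mathcal M_\sigma=\{v\in V:\operatorname{dist}(v,\mathcal M)\le\sigma\}$; - $\delta_\sigma=\sup\{\|u-v\|: u,v\in\mathcal M_\sigma,\ u-v\in W^\perp\}$. For a finite-dimensional subspace $E\subset V$ let $\mu(E,W)=\sup_{v\in E\setminus\{0\}}\|v\|/\|P_Wv\|$, with the conventions $\mu(\{0\},W)=1$ and $\mu(E,W)=+\infty$ if $E\cap W^\perp\ne\{0\}$.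 A reduced model family consists of: - sets $\mathcal M_1,\dots,\mathcal M_K$ with $\mathcal M=\bigcup_{k=1}^K\mathcal M_k$; - affine spaces $V_k=\bar u_k+\bar V_k$, where $\bar u_k\in V$ and $\bar V_k$ is a linear subspace of dimension $n_k\le m$; - numbers $\varepsilon_k\ge\sup_{u\in\mathcal M_k}\operatorname{dist}(u,V_k)$; - constants $\mu_k=\mu(\bar V_k,W)<\infty$. The family is $\sigma$-admissible if $\mu_k\varepsilon_k\le\sigma$ for all $k$. For $w\in W$ the PBDW estimators are $u_k^*(w)=\operatorname{argmin}\{\operatorname{dist}(v,V_k): v\in V_w\}$, $k=1,\dots,K$ (the minimizer is unique). Here the surrogate is local: for each $k$, $\mathcal S(\cdot,\mathcal M_k):V\to[0,\infty)$ satisfies $r\operatorname{dist}(v,\mathcal M_k)\le\mathcal S(v,\mathcal M_k)\le R\operatorname{dist}(v,\mathcal M_k)$ for all $v\in V$, where $0<r\le R$ are constants; set $\kappa=R/r$. *)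

From HB Require Import structures.
From mathcomp Require Import all_boot all_order all_algebra.
From mathcomp Require Import all_classical all_reals all_analysis.
Set Implicit Arguments. Unset Strict Implicit. Unset Printing Implicit Defensive.
Import Order.TTheory GRing.Theory Num.Theory.
Import numFieldNormedType.Exports.
Local Open Scope classical_set_scope.
Local Open Scope ring_scope.

Section Defs.
Variables (R : realType) (V : normedModType R).

(* real inner product inducing the norm of V (together with completeness of V
   this makes V a real Hilbert space) *)
Record inner_product (ip : V -> V -> R) : Prop := {
  ip_sym : forall x y, ip x y = ip y x;
  ip_linl : forall (a : R) x y z, ip (a *: x + y) z = a * ip x z + ip y z;
  ip_norm : forall x, ip x x = `|x| ^+ 2 }.

Definition lin_indep (n : nat) (b : 'I_n -> V) : Prop :=
  forall c : 'I_n -> R, \sum_(i < n) c i *: b i = 0 -> forall i, c i = 0.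
Definition span (n : nat) (b : 'I_n -> V) : set V :=
  [set v | exists c : 'I_n -> R, v = \sum_(i < n) c i *: b i].

Definition subspace_dim (E : set V) (n : nat) : Prop :=
  exists b : 'I_n -> V, lin_indep b /\ span b = E.

Definition orth (ip : V -> V -> R) (W : set V) : set V :=
  [set x | forall y, W y -> ip x y = 0].

Definition is_orth_proj (ip : V -> V -> R) (W : set V) (P : V -> V) : Prop :=
  forall v, W (P v) /\ orth ip W (v - P v).

Definition affine (a : V) (E : set V) : set V := [set a + x | x in E].

(* distance to a set (= +oo for the empty set) *)
Definition dist (v : V) (A : set V) : \bar R :=
  ereal_inf [set (`|v - a|)%:E | a in A].

Definition Msig (M : set V) (s : R) : set V := [set v | (dist v M <= s%:E)%E].

Definition delta (ip : V -> V -> R) (W M : set V) (s : R) : \bar R :=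
  ereal_sup [set (`|p.1 - p.2|)%:E | p in
     [set p : V * V | Msig M s p.1 /\ Msig M s p.2 /\ orth ip W (p.1 - p.2)]].

Definition mu (ip : V -> V -> R) (W : set V) (P : V -> V) (E : set V) : \bar R :=
  if `[< exists v, E v /\ v <> 0 /\ orth ip W v >] then +oo%E
  else if `[< forall v, E v -> v = 0 >] then 1%E
  else ereal_sup [set (`|v| / `|P v|)%:E | v in E `\ 0].

End Defs.

From HB Require Import structures.
From mathcomp Require Import all_boot all_order all_algebra.
From mathcomp Require Import all_classical all_reals all_analysis.
From mathcomp Require Import ring lra.
Set Implicit Arguments. Unset Strict Implicit.
Import Order.TTheory GRing.Theory Num.Theory.
Import numFieldNormedType.Exports.
Local Open Scope classical_set_scope.
Local Open Scope ring_scope.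

(* Everything rests on the PBDW error bound: if u* minimises dist(., u_k + V_k)
   over V_w = w + W^perp and mu = mu(V_k, W), then every v in V_w satisfies
   |v - u*| <= mu |v - p| for all p in u_k + V_k, hence
   |v - u*| <= mu dist(v, u_k + V_k).  Nearest points need not exist, so the
   proof uses a point q almost nearest to u*: moving u* by s z, z = v - u*,
   inside V_w and q by s g, g = p - q, inside u_k + V_k yields an approximate
   first-order optimality condition whose error vanishes as s -> 0.  The
   geometric input is that every z in W^perp satisfies |z| <= mu |z - g| for
   g in V_k, a Cauchy-Schwarz estimate in R^2. *)

(* Cauchy-Schwarz in R^2, (1 * x + sqrt(m - 1) * s)^2 <= m (x^2 + s^2),
   written without square roots *)
Lemma sqr_sum_le (R : realFieldType) (x a s m : R) :
  1 <= m -> 0 <= a -> 0 <= s -> a ^+ 2 <= (m - 1) * s ^+ 2 ->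
  (x + a) ^+ 2 <= m * (x ^+ 2 + s ^+ 2).
Proof.
move=> m1 a0 s0 h.
have key : 0 <= (m - 1) * (m * (x ^+ 2 + s ^+ 2) - (x + a) ^+ 2).
  have -> : (m - 1) * (m * (x ^+ 2 + s ^+ 2) - (x + a) ^+ 2) =
     ((m - 1) * x - a) ^+ 2 + m * ((m - 1) * s ^+ 2 - a ^+ 2) by ring.
  apply: addr_ge0; first exact: sqr_ge0.
  by apply: mulr_ge0; lra.
have [m_eq1|m_neq1] := eqVneq m 1.
  have a_eq0 : a = 0.
    apply/eqP; rewrite -sqrf_eq0 eq_le sqr_ge0 andbT.
    by move: h; rewrite m_eq1 subrr mul0r.
  by rewrite m_eq1 a_eq0 addr0 mul1r lerDl sqr_ge0.
have : 0 < m - 1 by rewrite subr_gt0 lt_neqAle eq_sym m_neq1.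
move: key; nra.
Qed.

Lemma le_of_shrinking_bound (R : realFieldType) (x y c : R) : 0 <= x -> 0 <= c ->
  (forall s, 0 < s < 1 -> x * (1 - s) <= y + c * s) -> x <= y.
Proof.
move=> x0 c0 h; apply/ler_addgt0Pr => e e0.
have pos : 0 < x + c + e + 1 by lra.
set s := e / (x + c + e + 1).
have se : s * (x + c + e + 1) = e by rewrite /s mulfVK // gt_eqF.
have s0 : 0 < s by rewrite divr_gt0.
have s1 : s < 1 by rewrite ltr_pdivrMr // mul1r; lra.
have := h s; rewrite s0 s1 => /(_ isT).
have : 0 < s * e by rewrite mulr_gt0.
nra.
Qed.

Lemma subrBB (V : zmodType) (x y u t : V) : (x - y) - (u - t) = (x - u) - (y - t).
Proof. by rewrite !opprB addrACA [RHS]addrACA [- y - u]addrC. Qed.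

Section Distance.
Variables (R : realType) (V : normedModType R).
Implicit Types (A B : set V) (v x a : V).

Lemma dist_ge0 v A : (0 <= dist v A)%E.
Proof. by apply/ereal_infP => _ [a _ <-]; rewrite lee_fin. Qed.

Lemma dist_le v A a : A a -> (dist v A <= (`|v - a|)%:E)%E.
Proof. by move=> Aa; apply: ereal_inf_lbound; exists a. Qed.

Lemma le_dist v A (c : \bar R) :
  (forall a, A a -> (c <= (`|v - a|)%:E)%E) -> (c <= dist v A)%E.
Proof. by move=> h; apply/ereal_infP => _ [a Aa <-]; exact: h. Qed.

Lemma dist_subset v A B : A `<=` B -> (dist v B <= dist v A)%E.
Proof. by move=> AB; apply: le_dist => a Aa; exact: dist_le (AB _ Aa). Qed.

Lemma dist_triangle v x A : (dist v A <= (`|v - x|)%:E + dist x A)%E.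
Proof.
rewrite addeC -leeBlDr //; apply: le_dist => a Aa.
rewrite leeBlDr // -EFinD; apply: le_trans (dist_le v Aa) _.
have -> : v - a = (v - x) + (x - a) by rewrite addrA subrK.
by rewrite lee_fin addrC ler_normD.
Qed.

Lemma dist_fin v A a : A a -> exists F, dist v A = F%:E /\ 0 <= F.
Proof.
move=> Aa; move: (dist_ge0 v A) (dist_le v Aa).
by case: (dist v A) => [F| |] //= F0 _; exists F.
Qed.

Lemma dist_approx_sq v A (F eta : R) : dist v A = F%:E -> 0 <= F -> 0 < eta ->
  exists a, A a /\ `|v - a| ^+ 2 <= F ^+ 2 + eta.
Proof.
move=> hF F0 eta0; set e := Num.min 1 (eta / (2 * F + 1)).
have e0 : 0 < e by rewrite lt_min ltr01 /= divr_gt0 // ltr_wpDl // mulr_ge0.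
have e1 : e <= 1 by rewrite ge_min lexx.
have e_eta : e * (2 * F + 1) <= eta.
  by rewrite -ler_pdivlMr ?ltr_wpDl ?mulr_ge0 // ge_min lexx orbT.
apply/not_existsP => hn.
have : ((F + e)%:E <= dist v A)%E.
  apply: le_dist => a Aa; rewrite lee_fin leNgt; apply/negP => hlt.
  apply: (hn a); split => //.
  have := normr_ge0 (v - a); nra.
by rewrite hF lee_fin; lra.
Qed.

Lemma surrogate_le A x v (s c X : R) : 0 <= c -> A v -> `|v - x| <= X ->
  (s%:E <= c%:E * dist x A)%E -> s <= c * X.
Proof.
move=> c0 Av vx sx; rewrite -lee_fin; apply: le_trans sx _.
rewrite EFinM lee_wpmul2l ?lee_fin //; apply: le_trans (dist_le x Av) _.
by rewrite distrC lee_fin.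
Qed.

Lemma dist_le_surrogate A x v (s r c X Y : R) : 0 < r ->
  (r%:E * dist x A <= s%:E)%E -> s <= c * Y -> `|v - x| <= X ->
  (dist v A <= (X + c / r * Y)%:E)%E.
Proof.
move=> r0 rx sY vx; apply: le_trans (dist_triangle v x A) _.
rewrite EFinD leeD ?lee_fin // mulrAC mulrC EFinM lee_pdivlMl //.
by apply: le_trans rx _; rewrite lee_fin.
Qed.
End Distance.

Section InnerProduct.
Variables (R : realType) (V : normedModType R) (ip : V -> V -> R).
Hypothesis hip : inner_product ip.
Implicit Types (W : set V) (x y z w : V).

Lemma ipDl x y z : ip (x + y) z = ip x z + ip y z.
Proof. by have := ip_linl hip 1 x y z; rewrite scale1r mul1r. Qed.

Lemma ip0l y : ip 0 y = 0.
Proof.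
have h := ipDl 0 0 y; rewrite addr0 in h.
by apply: (addrI (ip 0 y)); rewrite -h addr0.
Qed.

Lemma ipZl (a : R) x y : ip (a *: x) y = a * ip x y.
Proof. by have := ip_linl hip a x 0 y; rewrite addr0 ip0l addr0. Qed.

Lemma ipZr (a : R) x y : ip x (a *: y) = a * ip x y.
Proof. by rewrite ip_sym // ipZl // (ip_sym hip y). Qed.

Lemma normD2 x y : `|x + y| ^+ 2 = `|x| ^+ 2 + 2 * ip x y + `|y| ^+ 2.
Proof.
rewrite -!(ip_norm hip) ipDl (ip_sym hip x) (ip_sym hip y) !ipDl.
by rewrite (ip_sym hip x y); ring.
Qed.

Lemma pythagoras x y : ip x y = 0 -> `|x + y| ^+ 2 = `|x| ^+ 2 + `|y| ^+ 2.
Proof. by move=> xy; rewrite normD2 xy mulr0 addr0. Qed.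

Lemma orthZD W (a : R) x y : orth ip W x -> orth ip W y -> orth ip W (a *: x + y).
Proof. by move=> ox oy u Wu; rewrite ip_linl // ox // oy // mulr0 addr0. Qed.

Lemma orthZ W (a : R) x : orth ip W x -> orth ip W (a *: x).
Proof. by move=> ox; rewrite -[_ *: x]addr0; apply: orthZD => // u _; rewrite ip0l. Qed.

Lemma orthB W x y : orth ip W x -> orth ip W y -> orth ip W (x - y).
Proof. by move=> ox oy; rewrite addrC -scaleN1r; apply: orthZD. Qed.

Lemma affine_orthB W w x y : affine w (orth ip W) x -> affine w (orth ip W) y ->
  orth ip W (x - y).
Proof. by move=> [a oa <-] [b ob <-]; rewrite opprD addrACA subrr add0r; apply: orthB. Qed.

Lemma affine_orthD W w x z : affine w (orth ip W) x -> orth ip W z ->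
  affine w (orth ip W) (x + z).
Proof.
move=> [a oa <-] oz; exists (a + z); last by rewrite addrA.
by rewrite -[a]scale1r; apply: orthZD.
Qed.
End InnerProduct.

Lemma subspace_dim_lin (R : realType) (V : normedModType R) (E : set V) n :
  subspace_dim E n -> forall (a : R) x y, E x -> E y -> E (a *: x + y).
Proof.
move=> [b [_ <-]] a _ _ [cx ->] [cy ->]; exists (fun i => a * cx i + cy i).
by rewrite scaler_sumr -big_split; apply: eq_bigr => i _; rewrite scalerDl scalerA.
Qed.

Section Projection.
Variables (R : realType) (V : normedModType R) (ip : V -> V -> R).
Hypothesis hip : inner_product ip.
Variables (W : set V) (P : V -> V).
Hypothesis hP : is_orth_proj ip W P.

Lemma proj_pythagoras g : `|g| ^+ 2 = `|P g| ^+ 2 + `|g - P g| ^+ 2.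
Proof.
rewrite -(pythagoras hip); first by rewrite addrC subrK.
by rewrite (ip_sym hip); exact: (hP g).2 _ (hP g).1.
Qed.

Lemma mu_bound (E : set V) (mk : R) : mu ip W P E = mk%:E ->
  1 <= mk /\ forall g, E g -> `|g| <= mk * `|P g|.
Proof.
rewrite /mu; case: asboolP => [//|no_orth].
case: asboolP => [E0 [<-] | E_nz mkE].
  by split => // g /E0 ->; rewrite normr0 mul1r normr_ge0.
have ratio_le g : E g -> g <> 0 -> 0 < `|P g| /\ `|g| <= mk * `|P g|.
  move=> Eg g0; have Pg_gt0 : 0 < `|P g|.
    rewrite normr_gt0; apply/eqP => Pg0; apply: no_orth; exists g; do 2!split=> //.
    by have := (hP g).2; rewrite Pg0 subr0.
  split=> //; rewrite -ler_pdivrMr // -lee_fin -mkE.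
  by apply: ereal_sup_ubound; exists g.
have [g [Eg g0]] : exists g, E g /\ g <> 0.
  apply/not_existsP => hn; apply: E_nz => g Eg.
  by have := hn g; rewrite not_andP => -[//|/contrapT].
have [Pg_gt0 g_le] := ratio_le g Eg g0.
have mk1 : 1 <= mk.
  have Pg_le : `|P g| <= `|g|.
    by rewrite -ler_sqr ?nnegrE ?normr_ge0 // (proj_pythagoras g) lerDl sqr_ge0.
  by rewrite -(ler_pM2r Pg_gt0) mul1r (le_trans Pg_le g_le).
split=> // h Eh; have [->|h0] := eqVneq h 0.
  by rewrite normr0 mulr_ge0 ?normr_ge0 // (le_trans ler01 mk1).
exact: (ratio_le h Eh (elimN eqP h0)).2.
Qed.

Lemma orth_norm_le (E : set V) (mk : R) z g : 1 <= mk ->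
  (forall g, E g -> `|g| <= mk * `|P g|) ->
  orth ip W z -> E g -> `|z| <= mk * `|z - g|.
Proof.
move=> mk1 E_mu oz Eg; set y := g - P g.
have oy : orth ip W y := (hP g).2.
have dist_split : `|z - g| ^+ 2 = `|P g| ^+ 2 + `|y - z| ^+ 2.
  rewrite -(pythagoras hip); last by rewrite (ip_sym hip) (orthB hip oy oz (hP g).1).
  by rewrite distrC /y addrA [P g + _]addrC subrK.
have y_small : `|y| ^+ 2 <= (mk ^+ 2 - 1) * `|P g| ^+ 2.
  have g_sq : `|g| ^+ 2 <= mk ^+ 2 * `|P g| ^+ 2.
    rewrite -exprMn ler_sqr ?nnegrE ?normr_ge0 ?E_mu //.
    exact: le_trans (normr_ge0 g) (E_mu g Eg).
  have := proj_pythagoras g; rewrite -/y; lra.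
have z_le : `|z| <= `|y - z| + `|y|.
  by have := ler_normB y (y - z); rewrite opprB addrC subrK (addrC `|y|).
have mk0 : 0 <= mk := le_trans ler01 mk1.
rewrite -ler_sqr ?nnegrE ?mulr_ge0 ?normr_ge0 // exprMn dist_split addrC.
apply: le_trans (sqr_sum_le _ _ (normr_ge0 y) (normr_ge0 (P g)) y_small).
  by rewrite ler_sqr ?nnegrE ?addr_ge0 ?normr_ge0.
by rewrite -[1](expr1n _ 2) ler_pXn2r // ?nnegrE.
Qed.
End Projection.

Section PBDW.
Variables (R : realType) (V : normedModType R) (ip : V -> V -> R).
Hypothesis hip : inner_product ip.
Variables (W : set V) (P : V -> V).
Hypothesis hP : is_orth_proj ip W P.
Variables (E : set V) (mk : R) (ub w us : V).
Hypothesis E_lin : forall (a : R) x y, E x -> E y -> E (a *: x + y).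
Hypothesis mk1 : 1 <= mk.
Hypothesis E_mu : forall g, E g -> `|g| <= mk * `|P g|.
Hypothesis us_Vw : affine w (orth ip W) us.
Hypothesis us_min : forall x, affine w (orth ip W) x ->
  (dist us (affine ub E) <= dist x (affine ub E))%E.

Lemma affine_diff p q : affine ub E p -> affine ub E q -> E (p - q).
Proof.
move=> [ep Eep <-] [eq Eeq <-]; rewrite opprD addrACA subrr add0r addrC -scaleN1r.
exact: E_lin.
Qed.

Lemma affine_shift q g (t : R) : affine ub E q -> E g -> affine ub E (q + t *: g).
Proof.
by move=> [eq Eeq <-] Eg; exists (t *: g + eq); [exact: E_lin | rewrite addrA addrAC].
Qed.

(* the bound |v - us| <= mk |v - p| up to an error that vanishes with s; it
   comes from comparing dist(us, A) with dist(us + s (v - us), A) *)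
Lemma pbdw_estimate_approx v p s : affine w (orth ip W) v -> affine ub E p ->
  0 < s < 1 -> `|v - us| ^+ 2 * (1 - s) <= mk ^+ 2 * (`|v - p| ^+ 2 + s).
Proof.
move=> Vv Ap /andP[s_gt0 s_lt1].
have [F [hF F0]] := dist_fin us Ap.
have [q [Aq q_near]] := dist_approx_sq hF F0 (exprn_gt0 2 s_gt0).
set a := us - q; set z := v - us; set g := p - q; set d := (v - p) - a.
have Eg : E g := affine_diff Ap Aq.
have oz : orth ip W z := affine_orthB hip Vv us_Vw.
have dE : d = z - g by rewrite /d /a subrBB.
have z_le : `|z| <= mk * `|d| by rewrite dE; apply: (orth_norm_le hip hP mk1 E_mu oz Eg).
have F_le : F <= `|a + s *: d|.
  have Vz : affine w (orth ip W) (us + s *: z) := affine_orthD hip us_Vw (orthZ hip s oz).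
  have Aqg : affine ub E (q + s *: g) := affine_shift s Aq Eg.
  have -> : a + s *: d = (us + s *: z) - (q + s *: g) by rewrite dE scalerBr opprD addrACA.
  by rewrite -lee_fin -hF; apply: le_trans (us_min Vz) (dist_le _ Aqg).
have perturbed : `|a + s *: d| ^+ 2 = `|a| ^+ 2 + 2 * s * ip a d + s ^+ 2 * `|d| ^+ 2.
  by rewrite (normD2 hip) (ipZr hip) normrZ exprMn (real_normK (num_real s)) mulrA.
have unperturbed : `|v - p| ^+ 2 = `|a| ^+ 2 + 2 * ip a d + `|d| ^+ 2.
  by rewrite -(normD2 hip) /d [a + _]addrC subrK.
have first_order : 0 <= s + 2 * ip a d + s * `|d| ^+ 2.
  rewrite -(pmulr_rge0 _ s_gt0).
  have : F ^+ 2 <= `|a + s *: d| ^+ 2 by rewrite ler_sqr ?nnegrE.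
  rewrite perturbed; move: q_near; rewrite -/a; nra.
have d_le : `|d| ^+ 2 * (1 - s) <= `|v - p| ^+ 2 + s.
  by rewrite unperturbed; have := sqr_ge0 `|a|; nra.
have z_sq : `|z| ^+ 2 <= mk ^+ 2 * `|d| ^+ 2.
  rewrite -exprMn ler_sqr ?nnegrE ?normr_ge0 //.
  exact: le_trans (normr_ge0 z) z_le.
apply: le_trans (ler_wpM2r _ z_sq) _; first by rewrite subr_ge0 ltW.
by rewrite -mulrA ler_wpM2l ?sqr_ge0.
Qed.

Lemma pbdw_estimate_le v p : affine w (orth ip W) v -> affine ub E p ->
  `|v - us| <= mk * `|v - p|.
Proof.
move=> Vv Ap; have mk0 : 0 <= mk := le_trans ler01 mk1.
rewrite -ler_sqr ?nnegrE ?mulr_ge0 ?normr_ge0 // exprMn.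
apply: (@le_of_shrinking_bound _ _ _ (mk ^+ 2)); rewrite ?sqr_ge0 // => s s01.
by rewrite -mulrDr; apply: pbdw_estimate_approx.
Qed.

Lemma pbdw_error v X : affine w (orth ip W) v ->
  (dist v (affine ub E) <= X%:E)%E -> `|v - us| <= mk * X.
Proof.
move=> Vv hX; have mk_gt0 : 0 < mk := lt_le_trans ltr01 mk1.
have lb : ((`|v - us| / mk)%:E <= dist v (affine ub E))%E.
  apply: le_dist => p Ap; rewrite lee_fin ler_pdivrMr // mulrC.
  exact: pbdw_estimate_le.
by move: (le_trans lb hX); rewrite lee_fin ler_pdivrMr // mulrC.
Qed.
End PBDW.

Unset Implicit Arguments.

Theorem theorem3p6
  (R : realType) (V : completeNormedModType R)
  (ip : V -> V -> R) (hip : inner_product ip)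
  (d : nat) (Y : set 'rV[R]_d) (hY : compact Y)
  (uf : 'rV[R]_d -> V) (huf : {within Y, continuous uf})
  (m : nat) (W : set V) (hW : subspace_dim W m)
  (PW : V -> V) (hPW : is_orth_proj ip W PW)
  (K : nat) (Mk : 'I_K -> set V)
  (hM : uf @` Y = \bigcup_(k in [set: 'I_K]) Mk k)
  (ubar : 'I_K -> V) (Vbar : 'I_K -> set V) (n : 'I_K -> nat)
  (hVbar : forall k, subspace_dim (Vbar k) (n k) /\ (n k <= m)%N)
  (eps : 'I_K -> R)
  (heps : forall k, (ereal_sup [set dist u (affine (ubar k) (Vbar k)) | u in Mk k]
                      <= (eps k)%:E)%E)
  (muk : 'I_K -> R) (hmu : forall k, mu ip W PW (Vbar k) = (muk k)%:E)
  (ustar : 'I_K -> V -> V)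
  (hustar : forall k w, W w ->
     affine w (orth ip W) (ustar k w) /\
     forall v, affine w (orth ip W) v ->
       (dist (ustar k w) (affine (ubar k) (Vbar k))
          <= dist v (affine (ubar k) (Vbar k)))%E)
  (Sur : 'I_K -> V -> R) (r Rc : R) (hr : 0 < r) (hrR : r <= Rc)
  (hS : forall k v, 0 <= Sur k v /\
     (r%:E * dist v (Mk k) <= (Sur k v)%:E)%E /\
     ((Sur k v)%:E <= Rc%:E * dist v (Mk k))%E) :
  forall u, (uf @` Y) u ->
  let w := PW u in
  let Mw := uf @` Y `&` affine w (orth ip W) in
  let Ek := fun k => [set v | affine w (orth ip W) v /\
                        (dist v (affine (ubar k) (Vbar k)) <= (eps k)%:E)%E] in
  let S := [set k : 'I_K | Sur k (ustar k w) <= Rc * muk k * eps k] in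
  let Mwstar := \bigcup_(k in S) Ek k in
  Mw `<=` Mwstar /\
  (forall sigma : R, 0 < sigma -> (forall k, muk k * eps k <= sigma) ->
     (ereal_sup [set ereal_inf [set (`|v - u'|)%:E | u' in Mw] | v in Mwstar]
        <= delta ip W (uf @` Y) ((Rc / r + 1) * sigma))%E).
Proof.
move=> u Mu w Mw Ek S Mwstar.
have Ww : W w := (hPW u).1.
have Vw_u : affine w (orth ip W) u.
  by exists (u - PW u); [exact: (hPW u).2 | rewrite /w addrC subrK].
have Rc0 : 0 <= Rc := le_trans (ltW hr) hrR.
have estimate k v X : affine w (orth ip W) v ->
    (dist v (affine (ubar k) (Vbar k)) <= X%:E)%E -> `|v - ustar k w| <= muk k * X.
  have [mk1 E_mu] := mu_bound hip hPW (hmu k).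
  have [us_Vw us_min] := hustar k w Ww.
  apply: (pbdw_error hip hPW (subspace_dim_lin (hVbar k).1) mk1 E_mu us_Vw us_min).
split.
  (* v in M_k is within muk k * eps k of u_k^*(w), so the surrogate selects k *)
  move=> v [Mv Vv]; have := Mv; rewrite hM => -[k _ Mkv].
  have v_eps : (dist v (affine (ubar k) (Vbar k)) <= (eps k)%:E)%E.
    by apply: le_trans (heps k); apply: ereal_sup_ubound; exists v.
  exists k; last by split.
  rewrite /S /= -mulrA; apply: surrogate_le Rc0 Mkv (estimate k v _ Vv v_eps) _.
  exact: (hS k _).2.2.
move=> sigma s0 hadm; apply: ge_ereal_sup => _ [v [k Sk [Vv v_eps]] <-].
(* the pair (v, u) enters delta: u lies in M_w, v is close to M_k, and v - u
   is in W^perp *)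
apply: le_trans (ereal_inf_lbound _) _; first by exists u.
apply: ereal_sup_ubound; exists (v, u) => //=; split; last split.
- have Mk_sub : Mk k `<=` uf @` Y by rewrite hM => x Mx; exists k.
  have sur_le : Sur k (ustar k w) <= Rc * sigma.
    by apply: le_trans Sk _; rewrite -mulrA ler_wpM2l.
  apply: le_trans (dist_subset v Mk_sub) _; rewrite mulrDl mul1r addrC.
  apply: (dist_le_surrogate hr (hS k _).2.1 sur_le).
  exact: le_trans (estimate k v _ Vv v_eps) (hadm k).
- apply: le_trans (dist_le u Mu) _; rewrite subrr normr0 lee_fin.
  by rewrite mulr_ge0 ?addr_ge0 ?divr_ge0 // ltW.
- apply: (affine_orthB hip Vv Vw_u).
Qed.
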